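(* Let $\mathbf{x}=(x_1,\ldots,x_d)^T\in\mathbb{R}^d$ be nonzero, $m<d$ a positive integer, $0<\alpha<1$, and $p_k=\alpha\frac{|x_k|}{\|\mathbf{x}\|_1}+(1-\alpha)\frac{x_k^2}{\|\mathbf{x}\|_2^2}$. Draw $t_1,\ldots,t_m\in[d]$ i.i.d. with $\mathbb{P}(t_j=k)=p_k$, and let $\mathbf{S}\in\mathbb{R}^{d\times m}$ have $j$-th column $\mathbf{e}_{t_j}/\sqrt{m p_{t_j}}$. Then $$\mathbb{E}[\mathbf{S}\mathbf{S}^T\mathbf{x}\mathbf{x}^T\mathbf{S}\mathbf{S}^T]=\sum_{k=1}^d\frac{x_k^2}{mp_k}\mathbf{e}_k\mathbf{e}_k^T+\frac{m-1}{m}\mathbf{x}\mathbf{x}^T,$$ $$\mathbb{E}[\mathbb{D}(\mathbf{S}\mathbf{S}^T\mathbf{x}\mathbf{x}^T\mathbf{S}\mathbf{S}^T)]=\sum_{k=1}^d\Big(\frac{1}{mp_k}+\frac{m-1}{m}\Big)x_k^2\mathbf{e}_k\mathbf{e}_k^T,$$ $$\mathbb{E}[(\mathbb{D}(\mathbf{S}\mathbf{S}^T\mathbf{x}\mathbf{x}^T\mathbf{S}\mathbf{S}^T))^2]=\sum_{k=1}^d\Big[\frac{1}{m^3p_k^3}+\frac{7(m-1)}{m^3p_k^2}+\frac{6(m^2-3m+2)}{m^3p_k}+\frac{m^3-6m^2+11m-6}{m^3}\Big]x_k^4\mathbf{e}_k\mathbf{e}_k^T,$$ $$\mathbb{E}[\mathbf{S}\mathbf{S}^T\mathbf{x}\mathbf{x}^T\mathbf{S}\mathbf{S}^T\,\mathbb{D}(\mathbf{S}\mathbf{S}^T\mathbf{x}\mathbf{x}^T\mathbf{S}\mathbf{S}^T)]=\big(\mathbb{E}[\mathbb{D}(\mathbf{S}\mathbf{S}^T\mathbf{x}\mathbf{x}^T\mathbf{S}\mathbf{S}^T)\,\mathbf{S}\mathbf{S}^T\mathbf{x}\mathbf{x}^T\mathbf{S}\mathbf{S}^T]\big)^T$$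 $$=\sum_{k=1}^d\Big[\frac{1}{m^3p_k^3}+\frac{6(m-1)}{m^3p_k^2}+\frac{3(m^2-3m+2)}{m^3p_k}\Big]x_k^4\mathbf{e}_k\mathbf{e}_k^T+\frac{m-1}{m^3}\mathbf{x}\mathbf{x}^T\mathbb{D}\big(\{\tfrac{x_k^2}{p_k^2}\}\big)+\frac{3(m^2-3m+2)}{m^3}\mathbf{x}\mathbf{x}^T\Big[\mathbb{D}\big(\{\tfrac{x_k^2}{p_k}\}\big)+\frac{m-3}{3}\mathbb{D}(\{x_k^2\})\Big],$$ and $$\mathbb{E}[(\mathbf{S}\mathbf{S}^T\mathbf{x}\mathbf{x}^T\mathbf{S}\mathbf{S}^T)^2]=\sum_{k=1}^d\Big[\frac{4(m-1)}{m^3p_k^2}+\frac{1}{m^3p_k^3}\Big]x_k^4\mathbf{e}_k\mathbf{e}_k^T+\sum_{k=1}^d\Big[\frac{\|\mathbf{x}\|_2^2(m^2-3m+2)}{m^3}+\frac{m-1}{m^3}\sum_{l=1}^d\frac{x_l^2}{p_l}\Big]\frac{x_k^2}{p_k}\mathbf{e}_k\mathbf{e}_k^T$$ $$+\Big[\frac{\|\mathbf{x}\|_2^2(m^3-6m^2+11m-6)}{m^3}+\frac{m^2-3m+2}{m^3}\sum_{l=1}^d\frac{x_l^2}{p_l}\Big]\mathbf{x}\mathbf{x}^T+\mathbf{x}\mathbf{x}^T\Big[\frac{2(m^2-3m+2)}{m^3}\mathbb{D}\big(\{\tfrac{x_k^2}{p_k}\}\big)+\frac{m-1}{m^3}\mathbb{D}\big(\{\tfrac{x_k^2}{p_k^2}\}\big)\Big]$$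 $$+\Big[\frac{2(m^2-3m+2)}{m^3}\mathbb{D}\big(\{\tfrac{x_k^2}{p_k}\}\big)+\frac{m-1}{m^3}\mathbb{D}\big(\{\tfrac{x_k^2}{p_k^2}\}\big)\Big]\mathbf{x}\mathbf{x}^T.$$
   Context: $\mathbf{e}_1,\ldots,\mathbf{e}_d$ denote the standard basis vectors of $\mathbb{R}^d$, $[d]=\{1,\ldots,d\}$. For a square matrix $\mathbf{A}$, $\mathbb{D}(\mathbf{A})$ is the diagonal matrix having the same main diagonal as $\mathbf{A}$. For scalars $c_1,\ldots,c_d$, $\mathbb{D}(\{c_k\})$ denotes the $d\times d$ diagonal matrix with $c_1,\ldots,c_d$ on its diagonal (e.g. $\mathbb{D}(\{x_k^2/p_k\})$). Indices $k$ with $x_k=0$ have $p_k=0$; for such $k$ every term containing a factor $x_k^a/p_k^b$ ($a\ge 2$) is interpreted as $0$. *)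

From HB Require Import structures.
From mathcomp Require Import all_boot all_order all_algebra.
Set Implicit Arguments. Unset Strict Implicit. Unset Printing Implicit Defensive.
Import Order.TTheory GRing.Theory Num.Theory.
Local Open Scope ring_scope.

Section Defs.
Variables (R : rcfType) (d m : nat).

Definition xc (x : 'cV[R]_d) (k : 'I_d) : R := x k 0.

Definition norm1 (x : 'cV[R]_d) : R := \sum_k `|xc x k|.
Definition norm2sq (x : 'cV[R]_d) : R := \sum_k xc x k ^+ 2.

Definition pk (alpha : R) (x : 'cV[R]_d) (k : 'I_d) : R :=
  alpha * (`|xc x k| / norm1 x) + (1 - alpha) * (xc x k ^+ 2 / norm2sq x).

Definition Smat (p : 'I_d -> R) (t : {ffun 'I_m -> 'I_d}) : 'M[R]_(d, m) :=
  \matrix_(i < d, j < m) ((i == t j)%:R / Num.sqrt (m%:R * p (t j))).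

(* expectation over t_1,...,t_m i.i.d. with P(t_j = k) = p k *)
Definition Expect (a b : nat) (p : 'I_d -> R)
  (F : {ffun 'I_m -> 'I_d} -> 'M[R]_(a, b)) : 'M[R]_(a, b) :=
  \sum_(t : {ffun 'I_m -> 'I_d}) (\prod_(j < m) p (t j)) *: F t.

Definition Dg (A : 'M[R]_d) : 'M[R]_d := diag_mx (\row_i A i i).

Definition Dc (c : 'I_d -> R) : 'M[R]_d := diag_mx (\row_k c k).

Definition SSxxSS (p : 'I_d -> R) (x : 'cV[R]_d) (t : {ffun 'I_m -> 'I_d})
  : 'M[R]_d :=
  let S := Smat p t in S *m S^T *m (x *m x^T) *m S *m S^T.

End Defs.

From HB Require Import structures.
From mathcomp Require Import all_boot all_order all_algebra.
From mathcomp Require Import ring.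
Set Implicit Arguments. Unset Strict Implicit. Unset Printing Implicit Defensive.
Import Order.TTheory GRing.Theory Num.Theory.
Local Open Scope ring_scope.

(* Write L_i(t) for the i-th entry of S S^T x.  As the j-th column of S is
   e_{t_j} / sqrt(m p_{t_j}), L_i(t) = sum_j h_i(t_j) with
   h_i(k) = [i = k] x_i / (m p_i), a sum of m i.i.d. terms, and
   S S^T x x^T S S^T = L L^T.  Every entry of the six matrices is therefore a
   product of two or four such sample sums, whose expectation is a sum over
   the set partitions of the factors: a partition into r blocks is weighted by
   m (m-1) ... (m-r+1) times the single-draw means of the products over its
   blocks, and E[h_{a_1} ... h_{a_n}] = [a_1 = ... = a_n] x_a^n / (m^n p_a^(n-1)).
   The entry (i, j) of E[M^2] involves the trace sum_l L_l^2; its generic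
   summand l <> i, j is summed in closed form, and the indices l = i, j are
   corrected separately. *)

Section IidDraws.
Variables (T : finType).

Definition ffun_rcons m (t : {ffun 'I_m -> T}) (k : T) : {ffun 'I_m.+1 -> T} :=
  [ffun j => if unlift ord_max j is Some j' then t j' else k].

Lemma ffun_rcons_max m t k : @ffun_rcons m t k ord_max = k.
Proof. by rewrite ffunE unlift_none. Qed.

Lemma ffun_rcons_lift m t k (j : 'I_m) : @ffun_rcons m t k (lift ord_max j) = t j.
Proof. by rewrite ffunE liftK. Qed.

Lemma ffun_rcons_widen m t k (j : 'I_m) :
  @ffun_rcons m t k (widen_ord (leqnSn m) j) = t j.
Proof.
suff -> : widen_ord (leqnSn m) j = lift ord_max j by apply: ffun_rcons_lift.
by apply: val_inj; rewrite /= /bump leqNgt ltn_ord.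
Qed.

Lemma big_ffun_rcons (V : Type) (idx : V) (op : Monoid.com_law idx) m
    (G : {ffun 'I_m.+1 -> T} -> V) :
  \big[op/idx]_t G t =
  \big[op/idx]_(t : {ffun 'I_m -> T}) \big[op/idx]_k G (ffun_rcons t k).
Proof.
rewrite pair_bigA /= (reindex (fun u => ffun_rcons u.1 u.2)) //.
exists (fun t : {ffun 'I_m.+1 -> T} => ([ffun j => t (lift ord_max j)], t ord_max)).
  move=> [t k] _; rewrite /= ffun_rcons_max; congr (_, _).
  by apply/ffunP => j; rewrite ffunE ffun_rcons_lift.
move=> t _; apply/ffunP => j; rewrite ffunE.
by case: unliftP => [j' ->|->]; rewrite ?ffunE.
Qed.

Section Moments.
Variables (R : comPzRingType) (p : T -> R).

Definition mean (f : T -> R) : R := \sum_k p k * f k.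

Definition expect m (G : {ffun 'I_m -> T} -> R) : R :=
  \sum_(t : {ffun 'I_m -> T}) (\prod_(j < m) p (t j)) * G t.

Definition sample_sum m (f : T -> R) (t : {ffun 'I_m -> T}) : R := \sum_(j < m) f (t j).

Lemma sample_sum_rcons m f t k :
  sample_sum f (@ffun_rcons m t k) = sample_sum f t + f k.
Proof.
rewrite /sample_sum big_ord_recr /= ffun_rcons_max.
by congr (_ + _); apply: eq_bigr => j _; rewrite ffun_rcons_widen.
Qed.

Lemma expect_rcons m (G : {ffun 'I_m.+1 -> T} -> R) :
  expect G = expect (fun t => mean (fun k => G (ffun_rcons t k))).
Proof.
rewrite /expect big_ffun_rcons; apply: eq_bigr => t _.
rewrite mulr_sumr; apply: eq_bigr => k _.
rewrite big_ord_recr /= ffun_rcons_max mulrA; congr (_ * _ * _).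
by apply: eq_bigr => j _; rewrite ffun_rcons_widen.
Qed.

Lemma eq_expect m (G H : {ffun 'I_m -> T} -> R) : G =1 H -> expect G = expect H.
Proof. by move=> eGH; apply: eq_bigr => t _; rewrite eGH. Qed.

Lemma expectD m (G H : {ffun 'I_m -> T} -> R) :
  expect (fun t => G t + H t) = expect G + expect H.
Proof. by rewrite /expect -big_split; apply: eq_bigr => t _; rewrite mulrDr. Qed.

Lemma expectMr m (G : {ffun 'I_m -> T} -> R) c :
  expect (fun t => G t * c) = expect G * c.
Proof. by rewrite /expect mulr_suml; apply: eq_bigr => t _; rewrite mulrA. Qed.

Lemma expect_sum m (I : finType) (G : I -> {ffun 'I_m -> T} -> R) :
  expect (fun t => \sum_l G l t) = \sum_l expect (G l).
Proof. by rewrite /expect exchange_big; apply: eq_bigr => t _; rewrite mulr_sumr. Qed.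

Lemma eq_mean (f g : T -> R) : f =1 g -> mean f = mean g.
Proof. by move=> efg; apply: eq_bigr => k _; rewrite efg. Qed.

Lemma mean_delta (a : T) (f : T -> R) : mean (fun k => (a == k)%:R * f k) = p a * f a.
Proof.
rewrite /mean (bigD1 a) //= big1 => [|k /negbTE nka]; first by rewrite eqxx mul1r addr0.
by rewrite eq_sym nka mul0r mulr0.
Qed.

Hypothesis p_sum1 : \sum_k p k = 1.

Lemma mean_cst c : mean (fun _ => c) = c.
Proof. by rewrite /mean -mulr_suml p_sum1 mul1r. Qed.

Lemma expect_cst m c : expect (fun _ : {ffun 'I_m -> T} => c) = c.
Proof.
elim: m => [|m IHm].
  rewrite /expect (eq_bigr (fun _ => c)) => [|t _]; last by rewrite big_ord0 mul1r.
  by rewrite sumr_const card_ffun card_ord expn0.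
by rewrite expect_rcons -[RHS]IHm; apply: eq_expect => t; rewrite mean_cst.
Qed.

Lemma mean_shift X f : mean (fun k => X + f k) = X + mean f.
Proof.
rewrite -{2}(mean_cst X) /mean -big_split; apply: eq_bigr => k _ /=; ring.
Qed.

Lemma mean_shift2 X1 X2 f1 f2 :
  mean (fun k => (X1 + f1 k) * (X2 + f2 k)) =
  X1 * X2 + X1 * mean f2 + X2 * mean f1 + mean (f1 \* f2).
Proof.
rewrite -(mean_cst (X1 * X2)) /mean !mulr_sumr -!big_split.
by apply: eq_bigr => k _ /=; ring.
Qed.

Lemma mean_shift3 X1 X2 X3 f1 f2 f3 :
  mean (fun k => (X1 + f1 k) * (X2 + f2 k) * (X3 + f3 k)) =
  X1 * X2 * X3 + X1 * X2 * mean f3 + X1 * X3 * mean f2 + X2 * X3 * mean f1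
  + X1 * mean (f2 \* f3) + X2 * mean (f1 \* f3) + X3 * mean (f1 \* f2)
  + mean (f1 \* f2 \* f3).
Proof.
rewrite -(mean_cst (X1 * X2 * X3)) /mean !mulr_sumr -!big_split.
by apply: eq_bigr => k _ /=; ring.
Qed.

Lemma mean_shift4 X1 X2 X3 X4 f1 f2 f3 f4 :
  mean (fun k => (X1 + f1 k) * (X2 + f2 k) * (X3 + f3 k) * (X4 + f4 k)) =
  X1 * X2 * X3 * X4 + X1 * X2 * X3 * mean f4 + X1 * X2 * X4 * mean f3
  + X1 * X3 * X4 * mean f2 + X2 * X3 * X4 * mean f1
  + X1 * X2 * mean (f3 \* f4) + X1 * X3 * mean (f2 \* f4)
  + X1 * X4 * mean (f2 \* f3) + X2 * X3 * mean (f1 \* f4)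
  + X2 * X4 * mean (f1 \* f3) + X3 * X4 * mean (f1 \* f2)
  + X1 * mean (f2 \* f3 \* f4) + X2 * mean (f1 \* f3 \* f4)
  + X3 * mean (f1 \* f2 \* f4) + X4 * mean (f1 \* f2 \* f3)
  + mean (f1 \* f2 \* f3 \* f4).
Proof.
rewrite -(mean_cst (X1 * X2 * X3 * X4)) /mean !mulr_sumr -!big_split.
by apply: eq_bigr => k _ /=; ring.
Qed.

Lemma expect_sample_sum m f :
  expect (fun t : {ffun 'I_m -> T} => sample_sum f t) = m%:R * mean f.
Proof.
elim: m => [|m IHm].
  by rewrite mul0r /expect big1 // => t _; rewrite /sample_sum !big_ord0 mulr0.
rewrite expect_rcons.
under eq_expect => t do under eq_mean => k do rewrite sample_sum_rcons.
under eq_expect => t do rewrite mean_shift.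
by rewrite expectD IHm expect_cst -natr1; ring.
Qed.

Lemma expect_sample_sum2 m f1 f2 :
  expect (fun t : {ffun 'I_m -> T} => sample_sum f1 t * sample_sum f2 t) =
  m%:R * mean (f1 \* f2) + m%:R * (m%:R - 1) * (mean f1 * mean f2).
Proof.
elim: m => [|m IHm].
  by rewrite !mul0r addr0 /expect big1 // => t _; rewrite /sample_sum !big_ord0; ring.
rewrite expect_rcons.
under eq_expect => t do under eq_mean => k do rewrite !sample_sum_rcons.
under eq_expect => t do rewrite mean_shift2.
by rewrite !expectD !expectMr IHm !expect_sample_sum expect_cst -natr1; ring.
Qed.

Lemma expect_sample_sum3 m f1 f2 f3 :
  expect (fun t : {ffun 'I_m -> T} =>
    sample_sum f1 t * sample_sum f2 t * sample_sum f3 t) =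
  m%:R * mean (f1 \* f2 \* f3)
  + m%:R * (m%:R - 1) * (mean (f1 \* f2) * mean f3
      + mean (f1 \* f3) * mean f2 + mean (f2 \* f3) * mean f1)
  + m%:R * (m%:R - 1) * (m%:R - 2) * (mean f1 * mean f2 * mean f3).
Proof.
elim: m => [|m IHm].
  by rewrite !mul0r !addr0 /expect big1 // => t _; rewrite /sample_sum !big_ord0; ring.
rewrite expect_rcons.
under eq_expect => t do under eq_mean => k do rewrite !sample_sum_rcons.
under eq_expect => t do rewrite mean_shift3.
rewrite !expectD !expectMr IHm !expect_sample_sum2.
by rewrite !expect_sample_sum expect_cst -natr1; ring.
Qed.

Lemma expect_sample_sum4 m f1 f2 f3 f4 :
  expect (fun t : {ffun 'I_m -> T} =>
    sample_sum f1 t * sample_sum f2 t * sample_sum f3 t * sample_sum f4 t) =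
  m%:R * mean (f1 \* f2 \* f3 \* f4)
  + m%:R * (m%:R - 1) * (mean (f1 \* f2 \* f3) * mean f4
      + mean (f1 \* f2 \* f4) * mean f3 + mean (f1 \* f3 \* f4) * mean f2
      + mean (f2 \* f3 \* f4) * mean f1)
  + m%:R * (m%:R - 1) * (mean (f1 \* f2) * mean (f3 \* f4)
      + mean (f1 \* f3) * mean (f2 \* f4) + mean (f1 \* f4) * mean (f2 \* f3))
  + m%:R * (m%:R - 1) * (m%:R - 2) * (mean (f1 \* f2) * mean f3 * mean f4
      + mean (f1 \* f3) * mean f2 * mean f4 + mean (f1 \* f4) * mean f2 * mean f3
      + mean (f2 \* f3) * mean f1 * mean f4 + mean (f2 \* f4) * mean f1 * mean f3
      + mean (f3 \* f4) * mean f1 * mean f2)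
  + m%:R * (m%:R - 1) * (m%:R - 2) * (m%:R - 3)
    * (mean f1 * mean f2 * mean f3 * mean f4).
Proof.
elim: m => [|m IHm].
  by rewrite !mul0r !addr0 /expect big1 // => t _; rewrite /sample_sum !big_ord0; ring.
rewrite expect_rcons.
under eq_expect => t do under eq_mean => k do rewrite !sample_sum_rcons.
under eq_expect => t do rewrite mean_shift4.
rewrite !expectD !expectMr IHm !expect_sample_sum3 !expect_sample_sum2.
by rewrite !expect_sample_sum expect_cst -natr1; ring.
Qed.

End Moments.
End IidDraws.

Lemma Expect_entry (R : rcfType) d m a b (p : 'I_d -> R)
    (F : {ffun 'I_m -> 'I_d} -> 'M[R]_(a, b)) i j :
  Expect p F i j = expect p (fun t => F t i j).
Proof. by rewrite /Expect summxE; apply: eq_bigr => t _; rewrite mxE. Qed.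

Lemma sum_delta_mx_diag (R : rcfType) d (c : 'I_d -> R) :
  \sum_k c k *: delta_mx k k = Dc c.
Proof. by rewrite /Dc diag_mx_sum_delta; apply: eq_bigr => k _; rewrite mxE. Qed.

Lemma addmx_entry (R : pzSemiRingType) a b (A B : 'M[R]_(a, b)) i j :
  (A + B) i j = A i j + B i j.
Proof. by rewrite mxE. Qed.

Lemma scalemx_entry (R : pzRingType) a b c (A : 'M[R]_(a, b)) i j :
  (c *: A) i j = c * A i j.
Proof. by rewrite mxE. Qed.

Lemma Dc_entry (R : rcfType) d (c : 'I_d -> R) i j : Dc c i j = c i * (i == j)%:R.
Proof. by rewrite !mxE mulr_natr. Qed.

Lemma Dg_entry (R : rcfType) d (A : 'M[R]_d) i j : Dg A i j = A i i * (i == j)%:R.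
Proof. by rewrite !mxE mulr_natr. Qed.

Lemma outer_entry (R : rcfType) d (x : 'cV[R]_d) i j : (x *m x^T) i j = xc x i * xc x j.
Proof. by rewrite mxE big_ord1 mxE. Qed.

Lemma mul_Dc_entry (R : rcfType) d (A : 'M[R]_d) c i j : (A *m Dc c) i j = A i j * c j.
Proof. by rewrite mul_mx_diag !mxE. Qed.

Lemma Dc_mul_entry (R : rcfType) d (A : 'M[R]_d) c i j : (Dc c *m A) i j = c i * A i j.
Proof. by rewrite mul_diag_mx !mxE. Qed.

Lemma mul_Dg_entry (R : rcfType) d (A B : 'M[R]_d) i j : (A *m Dg B) i j = A i j * B j j.
Proof. by rewrite mul_mx_diag !mxE. Qed.

Lemma Dg_mul_entry (R : rcfType) d (A B : 'M[R]_d) i j : (Dg B *m A) i j = B i i * A i j.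
Proof. by rewrite mul_diag_mx !mxE. Qed.

Definition entryE := (addmx_entry, scalemx_entry, Dc_mul_entry, mul_Dc_entry,
  Dg_mul_entry, mul_Dg_entry, Dc_entry, Dg_entry, outer_entry).

Lemma sum_eq_outside (V : zmodType) (I : finType) (s : seq I) (F G : I -> V) :
  (forall l, l \notin s -> F l = G l) ->
  \sum_l F l = \sum_l G l + \sum_(l <- undup s) (F l - G l).
Proof.
move=> eqFG; rewrite sumrB !(big_uniq (undup s)) ?undup_uniq //.
rewrite (bigID (mem s)) [\sum_l G l](bigID (mem s)) /=.
rewrite [\sum_(l | l \notin s) F l](eq_bigr G) => [|l /eqFG //].
rewrite !(eq_bigl _ _ (mem_undup s)).
by rewrite addrAC [_ + (_ - _)]addrC addrNK.
Qed.

Section Sketch.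
Variables (R : rcfType) (d m : nat) (p : 'I_d -> R) (x : 'cV[R]_d).

Definition draw_contrib (i k : 'I_d) : R := (i == k)%:R * (xc x k / (m%:R * p k)).

Local Notation L i := (@sample_sum _ _ m (draw_contrib i)).

Hypothesis p_ge0 : forall k, 0 <= p k.

Lemma SSx_entry t i : (Smat p t *m (Smat p t)^T *m x) i 0 = L i t.
Proof.
rewrite mxE; under eq_bigr => l _ do rewrite mxE big_distrl /=.
rewrite exchange_big /=; apply: eq_bigr => j _.
rewrite (bigD1 (t j)) //= big1 => [|l /negbTE nlt]; last first.
  by rewrite !mxE nlt !mul0r mulr0 mul0r.
have sqrt_sq := sqr_sqrtr (mulr_ge0 (ler0n R m) (p_ge0 (t j))).
rewrite !mxE eqxx addr0 /draw_contrib /xc; set s := Num.sqrt _ in sqrt_sq *.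
by case: (i == t j); rewrite ?mul0r // !mul1r -sqrt_sq expr2 invfM mulrC.
Qed.

Lemma SSxxSS_entry t i j : SSxxSS p x t i j = L i t * L j t.
Proof.
set y := Smat p t *m (Smat p t)^T *m x.
have -> : SSxxSS p x t = y *m y^T by rewrite /SSxxSS /y !trmx_mul trmxK !mulmxA.
by rewrite mxE big_ord1 [(_^T) _ _]mxE !SSx_entry.
Qed.

Hypothesis x_eq0_of_p : forall k, p k = 0 -> xc x k = 0.
Hypothesis m_gt0 : (0 < m)%N.
Hypothesis p_sum1 : \sum_k p k = 1.

Let m_neq0 : m%:R != 0 :> R. Proof. by rewrite pnatr_eq0 -lt0n. Qed.

Lemma p_mul_contrib_pow a n :
  p a * (xc x a / (m%:R * p a)) ^+ n.+1 = xc x a ^+ n.+1 / (m%:R ^+ n.+1 * p a ^+ n).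
Proof.
have [pa0|pa_neq0] := eqVneq (p a) 0.
  by rewrite pa0 x_eq0_of_p // mul0r expr0n mul0r.
have mn_neq0 : m%:R ^+ n.+1 != 0 :> R by rewrite expf_neq0.
have pn_neq0 : p a ^+ n != 0 by rewrite expf_neq0.
rewrite expr_div_n exprMn [p a ^+ n.+1]exprSr.
move: (m%:R ^+ n.+1) (p a ^+ n) (xc x a ^+ n.+1) mn_neq0 pn_neq0 => M P X M_neq0 P_neq0.
by field; rewrite M_neq0 P_neq0 pa_neq0.
Qed.

Lemma mean_contrib a : mean p (draw_contrib a) = xc x a / m%:R.
Proof. by rewrite mean_delta -[_ / (_ * _)]expr1 p_mul_contrib_pow expr1 expr0 mulr1. Qed.

Lemma mean_contrib2 a b :
  mean p (draw_contrib a \* draw_contrib b) =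
  (a == b)%:R * (xc x a ^+ 2 / (m%:R ^+ 2 * p a)).
Proof.
rewrite (@eq_mean _ _ _ _ (fun k =>
  (a == k)%:R * ((b == k)%:R * (xc x k / (m%:R * p k)) ^+ 2))).
  by rewrite mean_delta mulrCA p_mul_contrib_pow eq_sym expr1.
by move=> k; rewrite /draw_contrib /=; ring.
Qed.

Lemma mean_contrib3 a b c :
  mean p (draw_contrib a \* draw_contrib b \* draw_contrib c) =
  (a == b)%:R * (a == c)%:R * (xc x a ^+ 3 / (m%:R ^+ 3 * p a ^+ 2)).
Proof.
rewrite (@eq_mean _ _ _ _ (fun k =>
  (a == k)%:R * ((b == k)%:R * (c == k)%:R * (xc x k / (m%:R * p k)) ^+ 3))).
  by rewrite mean_delta mulrCA p_mul_contrib_pow ![_ == a]eq_sym.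
by move=> k; rewrite /draw_contrib /=; ring.
Qed.

Lemma mean_contrib4 a b c e :
  mean p (draw_contrib a \* draw_contrib b \* draw_contrib c \* draw_contrib e) =
  (a == b)%:R * (a == c)%:R * (a == e)%:R * (xc x a ^+ 4 / (m%:R ^+ 4 * p a ^+ 3)).
Proof.
rewrite (@eq_mean _ _ _ _ (fun k =>
  (a == k)%:R
  * ((b == k)%:R * (c == k)%:R * (e == k)%:R * (xc x k / (m%:R * p k)) ^+ 4))).
  by rewrite mean_delta mulrCA p_mul_contrib_pow ![_ == a]eq_sym.
by move=> k; rewrite /draw_contrib /=; ring.
Qed.

(* [p k] may vanish (and then so does [xc x k]); treating [(p k)^-1] as an
   independent unknown spares [field] the side condition [p k != 0]. *)
Local Ltac field_inv_p :=
  rewrite ?eqxx /= ?mulr1n ?mulr0n ?invfM -?exprVn;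
  repeat match goal with |- context [(p ?k)^-1] => move: (p k)^-1 => ? end;
  field.

Lemma expect_contrib2 i j :
  expect p (fun t => L i t * L j t) =
  (i == j)%:R * (xc x i ^+ 2 / (m%:R * p i)) + (m%:R - 1) / m%:R * (xc x i * xc x j).
Proof.
rewrite (expect_sample_sum2 p_sum1).
rewrite mean_contrib2 !mean_contrib.
by have [->|_] := eqVneq i j; field_inv_p.
Qed.

Lemma expect_contrib13 a b :
  expect p (fun t => L a t * L b t * L b t * L b t) =
  (a == b)%:R * xc x a ^+ 4 * (1 / (m%:R ^+ 3 * p a ^+ 3)
    + 6%:R * (m%:R - 1) / (m%:R ^+ 3 * p a ^+ 2)
    + 3%:R * (m%:R - 1) * (m%:R - 2) / (m%:R ^+ 3 * p a))
  + xc x a * xc x b ^+ 3 * ((m%:R - 1) / (m%:R ^+ 3 * p b ^+ 2)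
    + 3%:R * (m%:R - 1) * (m%:R - 2) / (m%:R ^+ 3 * p b)
    + (m%:R - 1) * (m%:R - 2) * (m%:R - 3%:R) / m%:R ^+ 3).
Proof.
rewrite (expect_sample_sum4 p_sum1).
rewrite mean_contrib4 !mean_contrib3 !mean_contrib2 !mean_contrib.
by have [<-|_] := eqVneq a b; field_inv_p.
Qed.

Lemma expect_contrib_outside i j l : l \notin [:: i; j] ->
  expect p (fun t => L i t * L l t * L l t * L j t) =
  ((i == j)%:R * (xc x i ^+ 2 / p i) * ((m%:R - 1) / m%:R ^+ 3)
    + xc x i * xc x j * ((m%:R - 1) * (m%:R - 2) / m%:R ^+ 3)) * (xc x l ^+ 2 / p l)
  + ((i == j)%:R * (xc x i ^+ 2 / p i) * ((m%:R - 1) * (m%:R - 2) / m%:R ^+ 3)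
    + xc x i * xc x j * ((m%:R - 1) * (m%:R - 2) * (m%:R - 3%:R) / m%:R ^+ 3))
    * xc x l ^+ 2.
Proof.
rewrite !inE negb_or => /andP[/negbTE nli /negbTE nlj].
rewrite (expect_sample_sum4 p_sum1).
rewrite mean_contrib4 !mean_contrib3 !mean_contrib2 !mean_contrib [i == l]eq_sym nli nlj.
by have [->|_] := eqVneq i j; field_inv_p.
Qed.

Lemma sum_expect_contrib_trace i j :
  \sum_l expect p (fun t => L i t * L l t * L l t * L j t) =
  (i == j)%:R * (xc x i ^+ 4 * (1 / (m%:R ^+ 3 * p i ^+ 3)
      + 4%:R * (m%:R - 1) / (m%:R ^+ 3 * p i ^+ 2))
    + xc x i ^+ 2 / p i * ((m%:R - 1) / m%:R ^+ 3 * \sum_l xc x l ^+ 2 / p l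
      + (m%:R - 1) * (m%:R - 2) / m%:R ^+ 3 * \sum_l xc x l ^+ 2))
  + xc x i * xc x j * ((m%:R - 1) * (m%:R - 2) / m%:R ^+ 3 * \sum_l xc x l ^+ 2 / p l
    + (m%:R - 1) * (m%:R - 2) * (m%:R - 3%:R) / m%:R ^+ 3 * \sum_l xc x l ^+ 2)
  + xc x i * xc x j * ((m%:R - 1) / m%:R ^+ 3
      * (xc x i ^+ 2 / p i ^+ 2 + xc x j ^+ 2 / p j ^+ 2)
    + 2%:R * (m%:R - 1) * (m%:R - 2) / m%:R ^+ 3
      * (xc x i ^+ 2 / p i + xc x j ^+ 2 / p j)).
Proof.
rewrite (sum_eq_outside (@expect_contrib_outside i j)) big_split -!mulr_sumr /=.
have [<-|nij] := eqVneq i j; rewrite inE ?eqxx ?(negbTE nij) /= !big_cons big_nil.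
  by rewrite expect_contrib13; field_inv_p.
have -> : expect p (fun t => L i t * L i t * L i t * L j t) =
          expect p (fun t => L j t * L i t * L i t * L i t).
  by apply: eq_expect => t; ring.
by rewrite !expect_contrib13 [j == i]eq_sym (negbTE nij); field_inv_p.
Qed.

Local Notation M := (@SSxxSS R d m p x).

Lemma Expect_SSxxSS :
  Expect p M = \sum_k (xc x k ^+ 2 / (m%:R * p k)) *: delta_mx k k
               + ((m%:R - 1) / m%:R) *: (x *m x^T).
Proof.
apply/matrixP => i j; rewrite Expect_entry sum_delta_mx_diag.
rewrite !entryE.
under eq_expect => t do rewrite SSxxSS_entry.
by rewrite expect_contrib2; have [->|_] := eqVneq i j; field_inv_p.
Qed.

Lemma Expect_Dg_SSxxSS :
  Expect p (fun t => Dg (M t)) =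
  \sum_k ((1 / (m%:R * p k) + (m%:R - 1) / m%:R) * xc x k ^+ 2) *: delta_mx k k.
Proof.
apply/matrixP => i j; rewrite Expect_entry sum_delta_mx_diag Dc_entry.
under eq_expect => t do rewrite Dg_entry SSxxSS_entry.
by rewrite expectMr expect_contrib2; have [->|_] := eqVneq i j; field_inv_p.
Qed.

Lemma Expect_Dg_SSxxSS_sq :
  Expect p (fun t => Dg (M t) *m Dg (M t)) =
  \sum_k ((1 / (m%:R ^+ 3 * p k ^+ 3) + 7%:R * (m%:R - 1) / (m%:R ^+ 3 * p k ^+ 2)
      + 6%:R * (m%:R ^+ 2 - 3%:R * m%:R + 2%:R) / (m%:R ^+ 3 * p k)
      + (m%:R ^+ 3 - 6%:R * m%:R ^+ 2 + 11%:R * m%:R - 6%:R) / m%:R ^+ 3)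
    * xc x k ^+ 4) *: delta_mx k k.
Proof.
apply/matrixP => i j; rewrite Expect_entry sum_delta_mx_diag !entryE.
under eq_expect => t do rewrite !entryE !SSxxSS_entry !mulrA.
by rewrite expectMr expect_contrib13; have [->|_] := eqVneq i j; field_inv_p.
Qed.

Lemma Expect_SSxxSS_mul_Dg_tr :
  Expect p (fun t => M t *m Dg (M t)) = (Expect p (fun t => Dg (M t) *m M t))^T.
Proof.
apply/matrixP => i j; rewrite mxE !Expect_entry; apply: eq_expect => t.
by rewrite !entryE !SSxxSS_entry; ring.
Qed.

Lemma Expect_SSxxSS_mul_Dg :
  Expect p (fun t => M t *m Dg (M t)) =
  \sum_k ((1 / (m%:R ^+ 3 * p k ^+ 3) + 6%:R * (m%:R - 1) / (m%:R ^+ 3 * p k ^+ 2)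
      + 3%:R * (m%:R ^+ 2 - 3%:R * m%:R + 2%:R) / (m%:R ^+ 3 * p k))
    * xc x k ^+ 4) *: delta_mx k k
  + ((m%:R - 1) / m%:R ^+ 3) *: (x *m x^T *m Dc (fun k => xc x k ^+ 2 / p k ^+ 2))
  + (3%:R * (m%:R ^+ 2 - 3%:R * m%:R + 2%:R) / m%:R ^+ 3) *:
      (x *m x^T *m (Dc (fun k => xc x k ^+ 2 / p k)
                    + ((m%:R - 3%:R) / 3%:R) *: Dc (fun k => xc x k ^+ 2))).
Proof.
apply/matrixP => i j; rewrite Expect_entry sum_delta_mx_diag mulmxDr -scalemxAr !entryE.
under eq_expect => t do rewrite !entryE !SSxxSS_entry !mulrA.
by rewrite expect_contrib13; have [->|_] := eqVneq i j; field_inv_p.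
Qed.

Lemma Expect_SSxxSS_sq :
  let sl := \sum_l xc x l ^+ 2 / p l in
  Expect p (fun t => M t *m M t) =
  \sum_k ((4%:R * (m%:R - 1) / (m%:R ^+ 3 * p k ^+ 2) + 1 / (m%:R ^+ 3 * p k ^+ 3))
    * xc x k ^+ 4) *: delta_mx k k
  + \sum_k ((norm2sq x * (m%:R ^+ 2 - 3%:R * m%:R + 2%:R) / m%:R ^+ 3
      + (m%:R - 1) / m%:R ^+ 3 * sl) * (xc x k ^+ 2 / p k)) *: delta_mx k k
  + (norm2sq x * (m%:R ^+ 3 - 6%:R * m%:R ^+ 2 + 11%:R * m%:R - 6%:R) / m%:R ^+ 3
     + (m%:R ^+ 2 - 3%:R * m%:R + 2%:R) / m%:R ^+ 3 * sl) *: (x *m x^T)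
  + x *m x^T *m ((2%:R * (m%:R ^+ 2 - 3%:R * m%:R + 2%:R) / m%:R ^+ 3)
                   *: Dc (fun k => xc x k ^+ 2 / p k)
                 + ((m%:R - 1) / m%:R ^+ 3) *: Dc (fun k => xc x k ^+ 2 / p k ^+ 2))
  + ((2%:R * (m%:R ^+ 2 - 3%:R * m%:R + 2%:R) / m%:R ^+ 3)
       *: Dc (fun k => xc x k ^+ 2 / p k)
     + ((m%:R - 1) / m%:R ^+ 3) *: Dc (fun k => xc x k ^+ 2 / p k ^+ 2)) *m (x *m x^T).
Proof.
move=> sl; apply/matrixP => i j; rewrite {}/sl Expect_entry !sum_delta_mx_diag.
rewrite mulmxDr mulmxDl -!scalemxAr -!scalemxAl !entryE /norm2sq.
under eq_expect => t do rewrite mxE; rewrite expect_sum.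
under eq_bigr => l _ do under eq_expect => t do rewrite !SSxxSS_entry !mulrA.
by rewrite sum_expect_contrib_trace; have [->|_] := eqVneq i j; field_inv_p.
Qed.

End Sketch.

Section SamplingProbabilities.
Variables (R : rcfType) (d : nat) (alpha : R) (x : 'cV[R]_d).
Hypotheses (alpha_ge0 : 0 <= alpha) (alpha_le1 : alpha <= 1).

Lemma norm1_gt0 k : xc x k != 0 -> 0 < norm1 x.
Proof.
move=> xk_neq0; rewrite /norm1 (bigD1 k) //= ltr_wpDr ?normr_gt0 //.
by rewrite sumr_ge0.
Qed.

Lemma norm2sq_gt0 k : xc x k != 0 -> 0 < norm2sq x.
Proof.
move=> xk_neq0; rewrite /norm2sq (bigD1 k) //= ltr_wpDr ?exprn_even_gt0 //.
by rewrite sumr_ge0 // => l _; rewrite sqr_ge0.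
Qed.

Lemma pk_ge0 k : 0 <= pk alpha x k.
Proof.
have n1_ge0 : 0 <= norm1 x by rewrite sumr_ge0.
have n2_ge0 : 0 <= norm2sq x by rewrite sumr_ge0 // => l _; rewrite sqr_ge0.
by rewrite addr_ge0 // mulr_ge0 ?subr_ge0 // divr_ge0 ?sqr_ge0.
Qed.

Lemma pk_gt0 k : xc x k != 0 -> 0 < pk alpha x k.
Proof.
move=> xk_neq0.
have a_gt0 : 0 < `|xc x k| / norm1 x by rewrite divr_gt0 ?normr_gt0 ?(norm1_gt0 xk_neq0).
have b_gt0 : 0 < xc x k ^+ 2 / norm2sq x.
  by rewrite divr_gt0 ?exprn_even_gt0 ?(norm2sq_gt0 xk_neq0).
move: alpha_ge0; rewrite le_eqVlt => /predU1P[<-|alpha_gt0].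
  by rewrite /pk mul0r add0r subr0 mul1r.
apply: ltr_pwDl; first exact: mulr_gt0.
by rewrite mulr_ge0 ?subr_ge0 // ltW.
Qed.

Lemma pk_sum1 : x != 0 -> \sum_k pk alpha x k = 1.
Proof.
move=> x_neq0.
have [k xk_neq0] : exists k, xc x k != 0.
  apply/existsP; apply: contraR x_neq0 => /existsPn xk_eq0.
  by apply/eqP/matrixP => i j; rewrite ord1 mxE; apply/eqP/negbNE/xk_eq0.
rewrite big_split /= -!mulr_sumr -!mulr_suml -/(norm1 x) -/(norm2sq x).
rewrite !divff ?gt_eqF ?(norm1_gt0 xk_neq0) ?(norm2sq_gt0 xk_neq0) //.
by rewrite !mulr1 subrKC.
Qed.

End SamplingProbabilities.

Unset Implicit Arguments.

Theorem lemma1 (R : rcfType) (d m : nat) (x : 'cV[R]_d) (alpha : R) :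
  x != 0 -> (0 < m)%N -> (m < d)%N -> 0 < alpha -> alpha < 1 ->
  let p := pk alpha x in
  let M := @SSxxSS R d m p x in
  let mr : R := m%:R in
  let xk := xc x in
  let sl := \sum_(l < d) xk l ^+ 2 / p l in
  (Expect p M =
     \sum_(k < d) (xk k ^+ 2 / (mr * p k)) *: delta_mx k k
     + ((mr - 1) / mr) *: (x *m x^T)) /\
   (Expect p (fun t => Dg (M t)) =
     \sum_(k < d) ((1 / (mr * p k) + (mr - 1) / mr) * xk k ^+ 2) *: delta_mx k k) /\
   (Expect p (fun t => Dg (M t) *m Dg (M t)) =
     \sum_(k < d)
       ((1 / (mr ^+ 3 * p k ^+ 3) + 7%:R * (mr - 1) / (mr ^+ 3 * p k ^+ 2)
         + 6%:R * (mr ^+ 2 - 3%:R * mr + 2%:R) / (mr ^+ 3 * p k)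
         + (mr ^+ 3 - 6%:R * mr ^+ 2 + 11%:R * mr - 6%:R) / mr ^+ 3)
        * xk k ^+ 4) *: delta_mx k k) /\
   (Expect p (fun t => M t *m Dg (M t)) =
     (Expect p (fun t => Dg (M t) *m M t))^T) /\
   (   Expect p (fun t => M t *m Dg (M t)) =
     \sum_(k < d)
       ((1 / (mr ^+ 3 * p k ^+ 3) + 6%:R * (mr - 1) / (mr ^+ 3 * p k ^+ 2)
         + 3%:R * (mr ^+ 2 - 3%:R * mr + 2%:R) / (mr ^+ 3 * p k))
        * xk k ^+ 4) *: delta_mx k k
     + ((mr - 1) / mr ^+ 3) *: (x *m x^T *m Dc (fun k => xk k ^+ 2 / p k ^+ 2))
     + (3%:R * (mr ^+ 2 - 3%:R * mr + 2%:R) / mr ^+ 3) *: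
         (x *m x^T *m (Dc (fun k => xk k ^+ 2 / p k)
                       + ((mr - 3%:R) / 3%:R) *: Dc (fun k => xk k ^+ 2)))) /\
   (Expect p (fun t => M t *m M t) =
     \sum_(k < d)
       ((4%:R * (mr - 1) / (mr ^+ 3 * p k ^+ 2) + 1 / (mr ^+ 3 * p k ^+ 3))
        * xk k ^+ 4) *: delta_mx k k
     + \sum_(k < d)
       ((norm2sq x * (mr ^+ 2 - 3%:R * mr + 2%:R) / mr ^+ 3
         + (mr - 1) / mr ^+ 3 * sl) * (xk k ^+ 2 / p k)) *: delta_mx k k
     + (norm2sq x * (mr ^+ 3 - 6%:R * mr ^+ 2 + 11%:R * mr - 6%:R) / mr ^+ 3
        + (mr ^+ 2 - 3%:R * mr + 2%:R) / mr ^+ 3 * sl) *: (x *m x^T)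
     + x *m x^T *m ((2%:R * (mr ^+ 2 - 3%:R * mr + 2%:R) / mr ^+ 3)
                      *: Dc (fun k => xk k ^+ 2 / p k)
                    + ((mr - 1) / mr ^+ 3) *: Dc (fun k => xk k ^+ 2 / p k ^+ 2))
     + ((2%:R * (mr ^+ 2 - 3%:R * mr + 2%:R) / mr ^+ 3)
          *: Dc (fun k => xk k ^+ 2 / p k)
        + ((mr - 1) / mr ^+ 3) *: Dc (fun k => xk k ^+ 2 / p k ^+ 2)) *m (x *m x^T)).
Proof.
(* The identities hold for every m > 0. *)
move=> x_neq0 m_gt0 _ alpha_gt0 alpha_lt1 p M mr xk sl.
have [alpha_ge0 alpha_le1] := (ltW alpha_gt0, ltW alpha_lt1).
have p_ge0 k : 0 <= p k by exact: pk_ge0.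
have p_sum1 : \sum_k p k = 1 by exact: pk_sum1.
have x_eq0_of_p k : p k = 0 -> xc x k = 0.
  by apply: contra_eq => xk_neq0; rewrite gt_eqF // pk_gt0.
split; first exact: Expect_SSxxSS.
split; first exact: Expect_Dg_SSxxSS.
split; first exact: Expect_Dg_SSxxSS_sq.
split; first exact: Expect_SSxxSS_mul_Dg_tr.
split; first exact: Expect_SSxxSS_mul_Dg.
exact: Expect_SSxxSS_sq.
Qed.
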